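(* Let $0<s<r<r_{max}(M)$, $\lambda>0$, and let $h_r$, $h_s$ be the solutions of $h''(h')^{n-1}=e^{\lambda h}\mathcal D_M(u)$ on $[0,r)$ resp. $[0,s)$ with $h_r\to\infty$ as $u\to r$ and $h_s\to\infty$ as $u\to s$. Then $h_r(u)\le h_s(u)$ for all $u\in[0,s)$.
   Context: For a real-analytic Riemannian manifold $M$ of real dimension $n\ge2$, $u=\sqrt\rho$ with $\rho(x,v)=4|v|^2$ on the Grauert tube $T^rM$. $\mathcal D_M$ is: $u^{n-1}$ for $\mathbb R^n$; $(\sin u)^{n-1}$ for $H^n$ ($r_{max}=\pi$); $(\sinh u)^{n-1}$ for the round sphere and real projective space; $2^{n-1}(\cosh\frac u2)^k(\sinh\frac u2)^{n-1}$, $k=1,3,7$, for complex projective space, quaternionic projective space, Cayley plane ($r_{max}=\infty$ except for $H^n$). Solutions are taken real-analytic in $u^2$ (so $h'(0)=0$), with $h'>0$ on $(0,r)$. *)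

From Stdlib Require Import Reals Lra Lia.
Open Scope R_scope.

(* The model manifolds of the paper (RP^n has the same D_M as the round
   sphere, so Sphere covers both S^n and RP^n). *)
Inductive model : Type :=
  | Euclid
  | Hyperbolic
  | Sphere
  | CPn
  | HPn
  | Cayley.

Definition valid_dim (M : model) (n : nat) : Prop :=
  match M with
  | Euclid | Hyperbolic | Sphere => (2 <= n)%nat
  | CPn => (2 <= n)%nat /\ Nat.Even n
  | HPn => (4 <= n)%nat /\ Nat.divide 4 n
  | Cayley => n = 16%nat
  end.

Definition DM (M : model) (n : nat) (u : R) : R :=
  match M with
  | Euclid => u ^ (n - 1)
  | Hyperbolic => (sin u) ^ (n - 1)
  | Sphere => (sinh u) ^ (n - 1)
  | CPn => 2 ^ (n - 1) * (cosh (u / 2)) ^ 1 * (sinh (u / 2)) ^ (n - 1)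
  | HPn => 2 ^ (n - 1) * (cosh (u / 2)) ^ 3 * (sinh (u / 2)) ^ (n - 1)
  | Cayley => 2 ^ (n - 1) * (cosh (u / 2)) ^ 7 * (sinh (u / 2)) ^ (n - 1)
  end.

Definition below_rmax (M : model) (r : R) : Prop :=
  match M with
  | Hyperbolic => r < PI
  | _ => True
  end.

Definition analytic_on_Ico (g : R -> R) (a : R) : Prop :=
  forall t0, 0 <= t0 < a ->
    exists (c : nat -> R) (delta : R), 0 < delta /\
      forall t, Rabs (t - t0) < delta ->
        infinite_sum (fun k => c k * (t - t0) ^ k) (g t).

(* h is real-analytic in u^2 on [0,r): h(u) = g(u^2) with g real-analytic on
   [0, r^2).  We take h on the symmetric interval (-r, r), i.e. h is given
   together with its (unique) even extension, so that derivatives at u = 0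
   are ordinary two-sided derivatives. *)
Definition analytic_in_u2 (h : R -> R) (r : R) : Prop :=
  exists g : R -> R, analytic_on_Ico g (r * r) /\
    forall u, -r < u < r -> h u = g (u * u).

Definition blowup_solution (M : model) (n : nat) (lam r : R) (h : R -> R) : Prop :=
  analytic_in_u2 h r /\
  exists h1 h2 : R -> R,
    (forall u, 0 <= u < r ->
       derivable_pt_lim h u (h1 u) /\
       derivable_pt_lim h1 u (h2 u) /\
       h2 u * (h1 u) ^ (n - 1) = exp (lam * h u) * DM M n u) /\
    (forall u, 0 < u < r -> 0 < h1 u) /\
    (forall K : R, exists delta, 0 < delta /\
       forall u, r - delta < u < r -> K < h u).

From Stdlib Require Import Reals Lra Lia Classical.
Open Scope R_scope.

(* If [hr > hs] somewhere on [[0, s)], then, since [hs] blows up at [s] while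
   [hr] stays bounded there, [hr - hs] is positive on some interval [(a, b)]
   with [hr <= hs] at [b], and at [a] unless [a = 0].  On [(a, b)] the equation
   gives [((hr')^n - (hs')^n)' = n D_M (e^(lam hr) - e^(lam hs)) > 0].  But the
   sign of [(hr - hs)'] at the endpoints gives [(hr')^n - (hs')^n >= 0] at [a]
   (at [a = 0] because [hr'(0) = hs'(0) = 0] by evenness in [u]) and [<= 0]
   at [b]. *)

Lemma derivable_pt_lim_right_min f x l d :
  0 < d -> derivable_pt_lim f x l ->
  (forall y, x < y < x + d -> f x <= f y) -> 0 <= l.
Proof.
  intros Hd Hf Hmin. apply Rnot_lt_le. intro Hl.
  destruct (Hf (- l) ltac:(lra)) as [e He].
  set (t := Rmin e d / 2).
  assert (Ht : 0 < t < e /\ t < d)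
    by (unfold t, Rmin; generalize (cond_pos e); destruct Rle_dec; lra).
  assert (Hq := He t ltac:(lra) ltac:(rewrite Rabs_right; lra)).
  assert (0 <= (f (x + t) - f x) / t).
  { apply Rmult_le_pos; [generalize (Hmin (x + t) ltac:(lra)); lra |].
    apply Rlt_le, Rinv_0_lt_compat; lra. }
  apply Rabs_def2 in Hq. lra.
Qed.

Lemma derivable_pt_lim_left_min f x l d :
  0 < d -> derivable_pt_lim f x l ->
  (forall y, x - d < y < x -> f x <= f y) -> l <= 0.
Proof.
  intros Hd Hf Hmin.
  assert (Hm : derivable_pt_lim (mirr_fct f) (- x) (- l)).
  { apply derivable_pt_lim_mirr_fwd. now rewrite !Ropp_involutive. }
  assert (0 <= - l); [|lra].
  apply (derivable_pt_lim_right_min _ _ _ d Hd Hm). intros y Hy.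
  unfold mirr_fct. rewrite Ropp_involutive. apply Hmin. lra.
Qed.

Lemma derivable_pt_lim_even_0 h r l :
  0 < r -> (forall x, - r < x < r -> h (- x) = h x) ->
  derivable_pt_lim h 0 l -> l = 0.
Proof.
  intros Hr Heven Hd.
  assert (Hm : derivable_pt_lim (mirr_fct h) 0 (- l)).
  { apply derivable_pt_lim_mirr_fwd. now rewrite Ropp_0, Ropp_involutive. }
  assert (Hd' : derivable_pt_lim h 0 (- l)).
  { apply (derivable_pt_lim_locally_ext (mirr_fct h) h 0 (- r) r); [lra | | exact Hm].
    intros z Hz. apply Heven; lra. }
  generalize (uniqueness_limite _ _ _ _ Hd Hd'); lra.
Qed.

Lemma continuity_pt_pos_nbhd w b :
  continuity_pt w b -> 0 < w b ->
  exists d, 0 < d /\ forall y, Rabs (y - b) < d -> 0 < w y.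
Proof.
  intros Hc Hb. destruct (Hc (w b) Hb) as [d [Hd Hy]].
  exists d; split; [exact Hd|]. intros y Hyb.
  destruct (Req_dec b y) as [<-|Hne]; [exact Hb|].
  assert (H := Hy y (conj (conj I Hne) Hyb)). unfold R_dist in H.
  apply Rabs_def2 in H; lra.
Qed.

(* The first zero of [w] to the right of [p] is the supremum of the [t] such
   that [w] stays positive on [[p, t]]. *)
Lemma first_nonpositive_point w p q :
  p < q -> (forall x, p <= x <= q -> continuity_pt w x) ->
  0 < w p -> w q <= 0 ->
  exists b, p < b <= q /\ w b <= 0 /\ forall x, p <= x < b -> 0 < w x.
Proof.
  intros Hpq Hc Hp Hq.
  set (E := fun t => p <= t <= q /\ forall x, p <= x <= t -> 0 < w x).
  assert (Ep : E p) by (split; [lra | intros x Hx; replace x with p by lra; exact Hp]).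
  destruct (completeness E) as [b [Hub Hlub]];
    [exists q; intros t [Ht _]; lra | now exists p |].
  assert (Hpb : p <= b) by now apply Hub.
  assert (Hbq : b <= q) by (apply Hlub; intros t [Ht _]; lra).
  assert (Hpos : forall x, p <= x < b -> 0 < w x).
  { intros x Hx. apply NNPP. intro Hwx.
    assert (b <= x); [|lra]. apply Hlub. intros t [Ht Hwt].
    apply Rnot_lt_le. intro Hxt. apply Hwx, Hwt. lra. }
  assert (Hwb : w b <= 0).
  { apply Rnot_lt_le. intro Hwb.
    assert (Hbq' : b < q) by (destruct (Req_dec b q) as [->|]; lra).
    destruct (continuity_pt_pos_nbhd w b (Hc b ltac:(lra)) Hwb) as [d [Hd Hy]].
    set (t := Rmin (b + d / 2) q).
    assert (Ht : b < t <= q /\ t < b + d) by (unfold t, Rmin; destruct Rle_dec; lra).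
    assert (t <= b); [|lra]. apply Hub. split; [lra|].
    intros x Hx. destruct (Rlt_dec x b); [apply Hpos; lra|].
    apply Hy. rewrite Rabs_right; lra. }
  exists b. split; [|auto].
  split; [|exact Hbq]. destruct (Req_dec p b) as [<-|]; lra.
Qed.

Lemma last_nonpositive_point w p q :
  p < q -> (forall x, p <= x <= q -> continuity_pt w x) ->
  w p <= 0 -> 0 < w q ->
  exists a, p <= a < q /\ w a <= 0 /\ forall x, a < x <= q -> 0 < w x.
Proof.
  intros Hpq Hc Hp Hq.
  destruct (first_nonpositive_point (mirr_fct w) (- q) (- p)) as [b [Hb [Hwb Hpos]]];
    unfold mirr_fct in *; rewrite ?Ropp_involutive; try lra.
  - intros x Hx. apply (continuity_pt_comp (opp_fct id) w).
    + apply continuity_pt_opp, derivable_continuous_pt, derivable_pt_id.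
    + apply Hc. unfold opp_fct, id. lra.
  - exists (- b). repeat split; try lra.
    intros x Hx. rewrite <- (Ropp_involutive x). apply Hpos. lra.
Qed.

Lemma positive_excursion w p x0 q :
  p <= x0 < q -> (forall x, p <= x <= q -> continuity_pt w x) ->
  0 < w x0 -> w q <= 0 ->
  exists a b, p <= a < b /\ b <= q /\ (a = p \/ w a <= 0) /\ w b <= 0 /\
    forall x, a < x < b -> 0 < w x.
Proof.
  intros Hx0 Hc Hw0 Hq.
  destruct (Rlt_dec 0 (w p)) as [Hp|Hp].
  - destruct (first_nonpositive_point w p q) as [b [Hb [Hwb Hpos]]]; try lra; auto.
    exists p, b. repeat split; auto; try lra.
    intros x Hx. apply Hpos. lra.
  - assert (Hpx0 : p < x0) by (destruct (Req_dec p x0) as [<-|]; lra).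
    destruct (last_nonpositive_point w p x0) as [a [Ha [Hwa Hposa]]]; try lra.
    { intros x Hx. apply Hc. lra. }
    destruct (first_nonpositive_point w x0 q) as [b [Hb [Hwb Hposb]]]; try lra.
    { intros x Hx. apply Hc. lra. }
    exists a, b. repeat split; auto; try lra.
    intros x Hx. destruct (Rle_dec x x0); [apply Hposa | apply Hposb]; lra.
Qed.

Lemma blowup_eventually_dominates f g p q :
  p < q -> (forall x, p <= x <= q -> continuity_pt f x) ->
  (forall K, exists d, 0 < d /\ forall u, q - d < u < q -> K < g u) ->
  exists t, p < t < q /\ f t < g t.
Proof.
  intros Hpq Hc Hg.
  destruct (continuity_ab_maj f p q) as [m [Hm _]]; [lra | exact Hc |].
  destruct (Hg (f m)) as [d [Hd Hgd]].
  set (t := (Rmax p (q - d) + q) / 2).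
  assert (Ht : p < t < q /\ q - d < t) by (unfold t, Rmax; destruct Rle_dec; lra).
  exists t. split; [lra|].
  apply Rle_lt_trans with (f m); [apply Hm | apply Hgd]; lra.
Qed.

Section Comparison.

Variables (D : R -> R) (n : nat) (lam : R).

Definition ode_solution (h h1 h2 : R -> R) (r : R) : Prop :=
  forall u, 0 <= u < r ->
    derivable_pt_lim h u (h1 u) /\ derivable_pt_lim h1 u (h2 u) /\
    h2 u * h1 u ^ (n - 1) = exp (lam * h u) * D u.

Lemma ode_solution_restrict h h1 h2 r s :
  s <= r -> ode_solution h h1 h2 r -> ode_solution h h1 h2 s.
Proof. intros Hsr Hh u Hu. apply Hh. lra. Qed.

Hypotheses (Hn : (1 <= n)%nat) (Hlam : 0 < lam).
Variables (s : R) (hr h1r h2r hs h1s h2s : R -> R).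
Hypotheses (Hr : ode_solution hr h1r h2r s) (Hs : ode_solution hs h1s h2s s).

Lemma deriv_pow_gap_increasing a b :
  0 <= a < b -> b < s ->
  (forall x, a < x < b -> 0 < D x) -> (forall x, a < x < b -> hs x < hr x) ->
  h1r a ^ n - h1s a ^ n < h1r b ^ n - h1s b ^ n.
Proof.
  intros Hab Hbs HD Hgt.
  destruct (MVT_cor2 (fun x => h1r x ^ n - h1s x ^ n)
              (fun x => INR n * h1r x ^ pred n * h2r x - INR n * h1s x ^ pred n * h2s x) a b)
    as [c [Hmvt Hc]]; [lra | |].
  - intros c Hc. apply derivable_pt_lim_minus.
    + apply (derivable_pt_lim_comp h1r (fun y => y ^ n));
        [apply Hr; lra | apply derivable_pt_lim_pow].
    + apply (derivable_pt_lim_comp h1s (fun y => y ^ n));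
        [apply Hs; lra | apply derivable_pt_lim_pow].
  - replace (pred n) with (n - 1)%nat in Hmvt by lia.
    destruct (Hr c ltac:(lra)) as [_ [_ Eqr]]. destruct (Hs c ltac:(lra)) as [_ [_ Eqs]].
    assert (Hexp : exp (lam * hs c) < exp (lam * hr c))
      by (apply exp_increasing, Rmult_lt_compat_l; auto; lra).
    assert (Hpos : 0 < INR n * (exp (lam * hr c) - exp (lam * hs c)) * D c * (b - a)).
    { repeat apply Rmult_lt_0_compat; try apply lt_0_INR; try lia; try lra. apply HD; lra. }
    replace (INR n * h1r c ^ (n - 1) * h2r c - INR n * h1s c ^ (n - 1) * h2s c)
      with (INR n * (h2r c * h1r c ^ (n - 1) - h2s c * h1s c ^ (n - 1))) in Hmvt by ring.
    rewrite Eqr, Eqs in Hmvt. nra.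
Qed.

Lemma deriv_pow_gap_nonneg_at_entry a d :
  0 <= a < s -> 0 < d -> 0 <= h1s a ->
  hr a <= hs a -> (forall y, a < y < a + d -> hs y < hr y) ->
  0 <= h1r a ^ n - h1s a ^ n.
Proof.
  intros Ha Hd H1s Hle Hgt.
  assert (Hw : 0 <= h1r a - h1s a).
  { apply (derivable_pt_lim_right_min (fun x => hr x - hs x) a _ d Hd).
    - apply derivable_pt_lim_minus; [apply Hr | apply Hs]; lra.
    - intros y Hy. generalize (Hgt y Hy). lra. }
  generalize (pow_incr (h1s a) (h1r a) n ltac:(lra)). lra.
Qed.

Lemma deriv_pow_gap_nonpos_at_exit b d :
  0 <= b < s -> 0 < d -> 0 <= h1r b ->
  hr b <= hs b -> (forall y, b - d < y < b -> hs y < hr y) ->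
  h1r b ^ n - h1s b ^ n <= 0.
Proof.
  intros Hb Hd H1r Hle Hgt.
  assert (Hw : h1r b - h1s b <= 0).
  { apply (derivable_pt_lim_left_min (fun x => hr x - hs x) b _ d Hd).
    - apply derivable_pt_lim_minus; [apply Hr | apply Hs]; lra.
    - intros y Hy. generalize (Hgt y Hy). lra. }
  generalize (pow_incr (h1r b) (h1s b) n ltac:(lra)). lra.
Qed.

Hypotheses (Hr0 : h1r 0 = 0) (Hs0 : h1s 0 = 0).
Hypotheses (Hr1 : forall u, 0 < u < s -> 0 < h1r u)
           (Hs1 : forall u, 0 < u < s -> 0 < h1s u).

Lemma no_positive_excursion a b :
  0 <= a < b -> b < s -> (a = 0 \/ hr a <= hs a) -> hr b <= hs b ->
  (forall x, a < x < b -> 0 < D x) -> (forall x, a < x < b -> hs x < hr x) ->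
  False.
Proof.
  intros Hab Hbs Ha Hb HD Hgt.
  assert (Hnonneg : forall h1, h1 0 = 0 -> (forall u, 0 < u < s -> 0 < h1 u) ->
                      forall u, 0 <= u < s -> 0 <= h1 u).
  { intros h1 H0 Hpos u Hu. destruct (Req_dec u 0) as [->|]; [lra|].
    apply Rlt_le, Hpos. lra. }
  assert (Hentry : 0 <= h1r a ^ n - h1s a ^ n).
  { destruct Ha as [-> | Ha].
    - rewrite Hr0, Hs0, pow_i by lia. lra.
    - apply (deriv_pow_gap_nonneg_at_entry a (b - a));
        [lra | lra | apply (Hnonneg h1s Hs0 Hs1); lra | exact Ha |].
      intros y Hy. apply Hgt. lra. }
  assert (Hexit : h1r b ^ n - h1s b ^ n <= 0).
  { apply (deriv_pow_gap_nonpos_at_exit b (b - a));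
      [lra | lra | apply (Hnonneg h1r Hr0 Hr1); lra | exact Hb |].
    intros y Hy. apply Hgt. lra. }
  generalize (deriv_pow_gap_increasing a b Hab Hbs HD Hgt). lra.
Qed.

End Comparison.

Lemma cosh_pos x : 0 < cosh x.
Proof. unfold cosh. generalize (exp_pos x) (exp_pos (- x)); lra. Qed.

Lemma sinh_pos x : 0 < x -> 0 < sinh x.
Proof. intro Hx. rewrite <- sinh_0. now apply sinh_lt. Qed.

Lemma projective_density_pos n k u :
  0 < u -> 0 < 2 ^ (n - 1) * cosh (u / 2) ^ k * sinh (u / 2) ^ (n - 1).
Proof.
  intro Hu.
  assert (0 < sinh (u / 2)) by (apply sinh_pos; lra).
  repeat apply Rmult_lt_0_compat; apply pow_lt; auto using cosh_pos; lra.
Qed.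

Lemma DM_pos M n r u : below_rmax M r -> 0 < u < r -> 0 < DM M n u.
Proof.
  intros Hr [Hu0 Hur]; destruct M; unfold DM, below_rmax in *;
    try apply projective_density_pos; try apply pow_lt; try lra.
  - apply sin_gt_0; lra.
  - apply sinh_pos; lra.
Qed.

Lemma analytic_in_u2_deriv_0 h r l :
  0 < r -> analytic_in_u2 h r -> derivable_pt_lim h 0 l -> l = 0.
Proof.
  intros Hr [g [_ Hg]]. apply (derivable_pt_lim_even_0 h r l Hr).
  intros x Hx. rewrite !Hg by lra. f_equal. ring.
Qed.

Theorem lemma2p3 (M : model) (n : nat) (s r lam : R) (hr hs : R -> R) :
  valid_dim M n ->
  0 < s -> s < r -> below_rmax M r ->
  0 < lam ->
  blowup_solution M n lam r hr ->
  blowup_solution M n lam s hs ->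
  forall u, 0 <= u < s -> hr u <= hs u.
Proof.
  intros Hdim Hs Hsr Hrmax Hlam [Ar [h1r [h2r [Hr [Hr1 _]]]]]
    [As [h1s [h2s [Hhs [Hs1 Hblow]]]]] u0 Hu0.
  assert (Hn : (1 <= n)%nat) by (destruct M; simpl in Hdim; lia).
  assert (Hr0 : h1r 0 = 0) by (apply (analytic_in_u2_deriv_0 hr r); [lra | exact Ar | apply Hr; lra]).
  assert (Hs0 : h1s 0 = 0) by (apply (analytic_in_u2_deriv_0 hs s); [lra | exact As | apply Hhs; lra]).
  assert (Hcont : forall x, 0 <= x < r -> continuity_pt hr x).
  { intros x Hx. apply derivable_continuous_pt. exists (h1r x). apply Hr; lra. }
  apply Rnot_lt_le. intro Hlt.
  destruct (blowup_eventually_dominates hr hs u0 s) as [t [Ht Hdom]]; try lra; auto.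
  { intros x Hx. apply Hcont. lra. }
  destruct (positive_excursion (fun x => hr x - hs x) 0 u0 t)
    as [a [b [Hab [Hbt [Ha [Hb Hpos]]]]]]; try lra.
  { intros x Hx. apply continuity_pt_minus; [apply Hcont | apply derivable_continuous_pt;
      exists (h1s x); apply Hhs]; lra. }
  assert (Hr_s : ode_solution (DM M n) n lam hr h1r h2r s)
    by (apply (ode_solution_restrict _ _ _ _ _ _ r); [lra | exact Hr]).
  assert (Hr1_s : forall u, 0 < u < s -> 0 < h1r u) by (intros; apply Hr1; lra).
  apply (no_positive_excursion _ _ _ Hn Hlam _ _ _ _ _ _ _ Hr_s Hhs Hr0 Hs0 Hr1_s Hs1 a b);
    try lra.
  - intros x Hx. apply (DM_pos M n r); [exact Hrmax | lra].
  - intros x Hx. generalize (Hpos x Hx). lra.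
Qed.
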